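(* Let $P,Q$ be probability measures on $(\mathcal{X},\mathcal{A})$, $\lambda=\mathrm{TV}(P,Q)$, $\rho:\mathcal{X}\to I\subseteq\mathbb{R}$ measurable, and $\alpha\in(0,1)$. Let $Q_{m,n,\alpha}:J_{m,n}\times[0,1]\to\mathbb{R}$ be a bounding function at level $\alpha$ (respectively an asymptotic bounding function at level $\alpha$) for the counting process $(V_{m,z})_{z\in J_{m,n}}$ built from $\rho$, and define $$\hat\lambda^{\rho}=\inf\Big\{\tilde\lambda\in[0,1]:\ \sup_{z\in J_{m,n}}\big[V_{m,z}-Q_{m,n,\alpha}(z,\tilde\lambda)\big]\le0\Big\}.$$ Then $\mathbb{P}(\hat\lambda^{\rho}>\lambda)\le\alpha$ (respectively $\limsup_{N\to\infty}\mathbb{P}(\hat\lambda^{\rho}>\lambda)\le\alpha$).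
   Context: For each $N$: deterministic positive integers $m,n$ with $N=m+n$, $m\le n$, $m/N\to\pi\in(0,1)$; independent samples $X_1,\dots,X_m$ i.i.d. $\sim P$ and $Y_1,\dots,Y_n$ i.i.d. $\sim Q$. Let $\rho_{(1)}\le\dots\le\rho_{(N)}$ be the order statistics of the combined values $\rho(X_1),\dots,\rho(X_m),\rho(Y_1),\dots,\rho(Y_n)$, $J_{m,n}=\{1,\dots,N-1\}$, and $V_{m,z}=\#\{i\le m:\rho(X_i)\le\rho_{(z)}\}$. A function $Q_{m,n,\alpha}$ on $J_{m,n}\times[0,1]$ is a bounding function at level $\alpha$ if $\mathbb{P}\big(\sup_{z\in J_{m,n}}[V_{m,z}-Q_{m,n,\alpha}(z,\lambda)]>0\big)\le\alpha$ with $\lambda=\mathrm{TV}(P,Q)$ the true total variation distance; it is an asymptotic bounding function at level $\alpha$ if instead $\limsup_{N\to\infty}\mathbb{P}\big(\sup_{z\in J_{m,n}}[V_{m,z}-Q_{m,n,\alpha}(z,\lambda)]>0\big)\le\alpha$. *)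

From HB Require Import structures.
From mathcomp Require Import all_boot all_order all_algebra.
From mathcomp Require Import all_classical all_reals all_analysis.
Set Implicit Arguments. Unset Strict Implicit. Unset Printing Implicit Defensive.
Import Order.TTheory GRing.Theory Num.Theory.
Local Open Scope classical_set_scope.
Local Open Scope ring_scope.

Definition TV (R : realType) (d : measure_display) (T : measurableType d)
  (P Q : probability T R) : R :=
  sup [set `|fine (P A) - fine (Q A)| | A in [set A : set T | measurable A]].

Definition mutually_independent (R : realType) (d d' : measure_display)
  (Om : measurableType d) (T : measurableType d') (Pr : probability Om R)
  (K : finType) (Z : K -> Om -> T) : Prop :=
  forall B : K -> set T, (forall k, measurable (B k)) ->
    fine (Pr (\bigcap_(k in [set: K]) (Z k @^-1` B k)))
    = \prod_(k : K) fine (Pr (Z k @^-1` B k)).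

Definition sumfam (A : Type) (m n : nat) (x : 'I_m -> A) (y : 'I_n -> A)
  (k : 'I_m + 'I_n) : A :=
  match k with inl i => x i | inr j => y j end.

(* z-th order statistic rho_(z) (1-indexed) of the combined values *)
Definition ostat (R : realType) (m n : nat) (x : 'I_m -> R) (y : 'I_n -> R)
  (z : nat) : R :=
  nth 0 (sort <=%R ([seq x i | i <- enum 'I_m] ++ [seq y j | j <- enum 'I_n])) z.-1.

Definition Vcount (R : realType) (m n : nat) (x : 'I_m -> R) (y : 'I_n -> R)
  (z : nat) : nat := #|[set i : 'I_m | x i <= ostat x y z]|.

(* sup_{z in J_{m,n}} [V_{m,z} - Qb(z,lam)] > 0, J_{m,n} = {1,...,N-1} *)
Definition exceeds (R : realType) (m n : nat) (Qb : nat -> R -> R)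
  (x : 'I_m -> R) (y : 'I_n -> R) (lam : R) : Prop :=
  exists z : nat, (1 <= z <= (m + n).-1)%N /\ 0 < (Vcount x y z)%:R - Qb z lam.

(* lambda-hat = inf { l in [0,1] : sup_z [V_{m,z} - Qb(z,l)] <= 0 }
   as an extended real (inf of the empty set is +oo) *)
Definition lamhat (R : realType) (m n : nat) (Qb : nat -> R -> R)
  (x : 'I_m -> R) (y : 'I_n -> R) : \bar R :=
  ereal_inf [set l%:E | l in [set l : R | 0 <= l <= 1 /\ ~ exceeds Qb x y l]].

From HB Require Import structures.
From mathcomp Require Import all_boot all_order all_algebra.
From mathcomp Require Import all_classical all_reals all_analysis.
From mathcomp Require Import lra.
Import Order.TTheory GRing.Theory Num.Theory numFieldNormedType.Exports.
Local Open Scope classical_set_scope.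
Local Open Scope ring_scope.
Set Implicit Arguments. Unset Strict Implicit.

(* If lambda-hat > lambda, then lambda, which lies in [0,1], is not in the set
   whose infimum defines lambda-hat: the counting process exceeds its bounding
   function at the true lambda.  Hence {lambda-hat > lambda} is contained in the
   exceedance event, and the bound alpha transfers (for each N, hence also to
   the limsup).  Both events are measurable because they depend on the sample
   only through the finite pattern of comparisons between the values rho(X_i),
   rho(Y_j). *)

Section OrderStatistics.
Variable R : realType.

Lemma sorted_nth_ltE (t : seq R) (a : R) z : sorted <=%R t -> (z < size t)%N ->
  (nth 0 t z < a) = (z < count (< a) t)%N.
Proof.
elim: t z => [|x t IH] z //= /[dup] /path_sorted st.
rewrite (path_sortedE le_trans) => /andP[/allP xt _] zs.
have [xa|ax] := ltP x a.
  by case: z zs => [|z] //= zs; rewrite IH.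
have -> : count (< a) t = 0%N.
  apply/eqP; rewrite -leqn0 leqNgt -has_count; apply/hasPn => u /xt xu.
  by rewrite /= -leNgt (le_trans ax).
case: z zs => [|z] /= zs; first by rewrite ltNge ax.
by rewrite ltNge (le_trans ax (xt _ (mem_nth 0 zs))).
Qed.

Lemma ge_nth_sortE (s : seq R) (a : R) z : (0 < z <= size s)%N ->
  (a <= nth 0 (sort <=%R s) z.-1) = (count (< a) s < z)%N.
Proof.
case: z => // z /= zs.
rewrite leNgt sorted_nth_ltE ?sort_sorted ?size_sort //; last exact: le_total.
by rewrite count_sort ltnS -leqNgt.
Qed.

Lemma Vcount_rankE m n (x : 'I_m -> R) (y : 'I_n -> R) z :
  (0 < z <= m + n)%N ->
  Vcount x y z = #|[set i : 'I_m | (count (fun j => x j < x i)%R (enum 'I_m)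
                                   + count (fun j => y j < x i)%R (enum 'I_n) < z)%N]|.
Proof.
move=> zN; rewrite /Vcount /ostat; congr (card (mem _)); apply/funext => i /=.
rewrite ge_nth_sortE; last by rewrite size_cat !size_map -!enumT !size_enum_ord.
by rewrite count_cat !count_map.
Qed.

Definition lt_pattern m n (x : 'I_m -> R) (y : 'I_n -> R) :
  {ffun ('I_m + 'I_n) * ('I_m + 'I_n) -> bool} :=
  [ffun p => sumfam x y p.1 < sumfam x y p.2].

Section SamePattern.
Variables (m n : nat) (x x' : 'I_m -> R) (y y' : 'I_n -> R).
Hypothesis same_pattern : lt_pattern x y = lt_pattern x' y'.

Lemma lt_pattern_ltE k l :
  (sumfam x y k < sumfam x y l) = (sumfam x' y' k < sumfam x' y' l).
Proof. by have /ffunP/(_ (k, l)) := same_pattern; rewrite !ffunE. Qed.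

Lemma Vcount_pattern z : (0 < z <= m + n)%N -> Vcount x y z = Vcount x' y' z.
Proof.
move=> zN; rewrite !Vcount_rankE //; congr (card (mem _)); apply/funext => i /=.
congr (_ + _ < _)%N; apply: eq_count => j.
  exact: (lt_pattern_ltE (inl j) (inl i)).
exact: (lt_pattern_ltE (inr j) (inl i)).
Qed.

Lemma exceeds_pattern Qb lam : exceeds Qb x y lam = exceeds Qb x' y' lam.
Proof.
rewrite /exceeds; congr ex; apply/funext => z.
have [/andP[z0 zN]|zJ] := boolP (1 <= z <= (m + n).-1)%N; last first.
  by apply/propext; split=> -[].
by rewrite Vcount_pattern // z0 (leq_trans zN (leq_pred _)).
Qed.

Lemma lamhat_pattern Qb : lamhat Qb x y = lamhat Qb x' y'.
Proof.
by rewrite /lamhat; congr (ereal_inf (image _ _)); apply/funext => l;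
  rewrite /= exceeds_pattern.
Qed.

End SamePattern.

Lemma lamhat_gt_exceeds m n Qb (x : 'I_m -> R) (y : 'I_n -> R) t :
  0 <= t <= 1 -> (t%:E < lamhat Qb x y)%E -> exceeds Qb x y t.
Proof.
move=> t01 tlt; apply: contrapT => nex.
have : (lamhat Qb x y <= t%:E)%E by apply: ereal_inf_lbound; exists t.
by rewrite leNgt tlt.
Qed.

End OrderStatistics.

Lemma measurable_pattern_invariant (R : realType) (d : measure_display)
    (Om : measurableType d) m n (x : 'I_m -> Om -> R) (y : 'I_n -> Om -> R)
    (G : ('I_m -> R) -> ('I_n -> R) -> Prop) :
  (forall i, measurable_fun setT (x i)) -> (forall j, measurable_fun setT (y j)) ->
  (forall x y x' y', lt_pattern x y = lt_pattern x' y' -> G x y -> G x' y') ->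
  measurable [set w | G (x^~ w) (y^~ w)].
Proof.
move=> mx my Ginv.
pose pat w := lt_pattern (x^~ w) (y^~ w).
set S := [set w | _].
have -> : S = \bigcup_(b in pat @` S) (pat @^-1` [set b]).
  apply/seteqP; split=> [w Sw|w [_ [w' Sw' <-]] /= ew]; first by exists (pat w).
  exact: Ginv Sw'.
apply: fin_bigcup_measurable => [|b _]; first exact: finite_finset.
have -> : pat @^-1` [set b] = \bigcap_(p in [set: ('I_m + 'I_n) * ('I_m + 'I_n)])
    [set w | (sumfam (x^~ w) (y^~ w) p.1 < sumfam (x^~ w) (y^~ w) p.2) = b p].
  apply/seteqP; split=> [w /= <- p _|w /= eb]; first by rewrite ffunE.
  by apply/ffunP => p; rewrite ffunE; exact: eb.
apply: fin_bigcap_measurable => [|p _]; first exact: finite_finset.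
have ms k : measurable_fun setT (fun w => sumfam (x^~ w) (y^~ w) k) by case: k.
rewrite -[X in measurable X]setTI.
exact: (measurable_realfun.measurable_fun_ltr (ms p.1) (ms p.2) measurableT (Y := [set b p]) I).
Qed.

Lemma le_measure_lamhat_exceeds (R : realType) (d : measure_display)
    (Om : measurableType d) (mu : {measure set Om -> \bar R}) m n
    (x : 'I_m -> Om -> R) (y : 'I_n -> Om -> R) Qb t :
  (forall i, measurable_fun setT (x i)) -> (forall j, measurable_fun setT (y j)) ->
  0 <= t <= 1 ->
  (mu [set w | t%:E < lamhat Qb (x^~ w) (y^~ w)]
   <= mu [set w | exceeds Qb (x^~ w) (y^~ w) t])%E.
Proof.
move=> mx my t01; apply: le_measure; rewrite ?inE.
- apply: (measurable_pattern_invariant (G := fun x y => t%:E < lamhat Qb x y)%E)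
    => // x1 y1 x2 y2 e.
  by rewrite (lamhat_pattern e).
- apply: (measurable_pattern_invariant (G := fun x y => exceeds Qb x y t))
    => // x1 y1 x2 y2 e.
  by rewrite (exceeds_pattern e).
- by move=> w; exact: lamhat_gt_exceeds.
Qed.

Lemma TV_ge0_le1 (R : realType) (d : measure_display) (T : measurableType d)
  (P Q : probability T R) : 0 <= TV P Q <= 1.
Proof.
have fine01 (Pr : probability T R) A : measurable A -> 0 <= fine (Pr A) <= 1.
  move=> mA; rewrite -!lee_fin fineK ?fin_num_measure //.
  by rewrite measure_ge0 probability_le1.
have ub1 : ubound [set `|fine (P A) - fine (Q A)| | A in [set A | measurable A]] 1.
  move=> _ [A mA <-].
  move: (fine01 P A mA) (fine01 Q A mA) => /andP[? ?] /andP[? ?].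
  by rewrite ler_norml; apply/andP; split; lra.
have TV0 : [set `|fine (P A) - fine (Q A)| | A in [set A | measurable A]]
             `|fine (P set0) - fine (Q set0)|.
  by exists set0; first exact: measurable0.
apply/andP; split; last by apply: ge_sup => //; eexists; exact: TV0.
apply: le_trans (ub_le_sup _ TV0) => //; by exists 1.
Qed.

Lemma le_limn_esup (R : realType) (u v : (\bar R)^nat) :
  (forall n, (u n <= v n)%E) -> (limn_esup u <= limn_esup v)%E.
Proof.
move=> uv; rewrite !limn_esup_lim; apply: lee_lim; try exact: is_cvg_esups.
apply: nearW => n; apply: ge_ereal_sup => _ [k /= kn <-].
by apply: le_trans (uv k) _; apply: ereal_sup_ubound; exists k.
Qed.
Theorem proposition6 (R : realType) (d d' : measure_display)
  (T : measurableType d) (P Q : probability T R)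
  (rho : T -> R) (alpha : R) :
  measurable_fun setT rho -> 0 < alpha < 1 ->
  (* non-asymptotic version *)
  (forall (Om : measurableType d') (Pr : probability Om R) (m n : nat)
     (X : 'I_m -> Om -> T) (Y : 'I_n -> Om -> T) (Qb : nat -> R -> R),
     (0 < m)%N -> (m <= n)%N ->
     (forall i, measurable_fun setT (X i)) ->
     (forall j, measurable_fun setT (Y j)) ->
     (forall i A, measurable A -> Pr (X i @^-1` A) = P A) ->
     (forall j A, measurable A -> Pr (Y j @^-1` A) = Q A) ->
     mutually_independent Pr (sumfam X Y) ->
     (Pr [set w | exceeds Qb (fun i => rho (X i w)) (fun j => rho (Y j w))
                   (TV P Q)] <= alpha%:E)%E ->
     (Pr [set w | lamhat Qb (fun i => rho (X i w)) (fun j => rho (Y j w))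
                   > (TV P Q)%:E] <= alpha%:E)%E)
  /\
  (* asymptotic version *)
  (forall (Om : nat -> measurableType d') (Pr : forall N, probability (Om N) R)
     (m n : nat -> nat) (pi : R)
     (X : forall N, 'I_(m N) -> Om N -> T) (Y : forall N, 'I_(n N) -> Om N -> T)
     (Qb : nat -> nat -> R -> R),
     (forall N, (2 <= N)%N -> [/\ m N + n N = N, (0 < m N)%N & (m N <= n N)%N]) ->
     0 < pi < 1 ->
     ((fun N => (m N)%:R / N%:R : R) @ \oo --> pi)%classic ->
     (forall N i, measurable_fun setT (X N i)) ->
     (forall N j, measurable_fun setT (Y N j)) ->
     (forall N i A, measurable A -> Pr N (X N i @^-1` A) = P A) ->
     (forall N j A, measurable A -> Pr N (Y N j @^-1` A) = Q A) ->
     (forall N, mutually_independent (Pr N) (sumfam (X N) (Y N))) ->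
     (limn_esup (fun N => Pr N [set w | exceeds (Qb N)
          (fun i => rho (X N i w)) (fun j => rho (Y N j w)) (TV P Q)])
        <= alpha%:E)%E ->
     (limn_esup (fun N => Pr N [set w | lamhat (Qb N)
          (fun i => rho (X N i w)) (fun j => rho (Y N j w)) > (TV P Q)%:E])
        <= alpha%:E)%E).
Proof.
move=> mrho _.
have lamhat_le_exceeds (Om : measurableType d') (Pr : probability Om R) m n
    (X : 'I_m -> Om -> T) (Y : 'I_n -> Om -> T) Qb :
    (forall i, measurable_fun setT (X i)) -> (forall j, measurable_fun setT (Y j)) ->
    (Pr [set w | (TV P Q)%:E < lamhat Qb (fun i => rho (X i w)) (fun j => rho (Y j w))]
     <= Pr [set w | exceeds Qb (fun i => rho (X i w)) (fun j => rho (Y j w)) (TV P Q)])%E.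
  move=> mX mY; apply: le_measure_lamhat_exceeds; last exact: TV_ge0_le1.
  - by move=> i; exact: measurableT_comp.
  - by move=> j; exact: measurableT_comp.
split=> [Om Pr m n X Y Qb _ _ mX mY _ _ _|Om Pr m n pi X Y Qb _ _ _ mX mY _ _ _];
  apply: le_trans.
- exact: lamhat_le_exceeds.
- by apply: le_limn_esup => N; exact: lamhat_le_exceeds.
Qed.
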